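(* Let $d\ge1$, let $G$ be a graph on $[n]$, and let $A\subset[n]$ be a vertex subset that induces a clique in the $d$-rigidity closure $C_d(G)$. Then $C_{d,A}(G)\subseteq C_d(G)$.
   Context: Fix a generic $\mathbf p:[n]\to\mathbb R^d$ (coordinates algebraically independent over $\mathbb Q$). For $x\ne y\in[n]$ let $\mathbf r_{xy}\in\mathbb R^{dn}$ have $(\mathbf p(x)-\mathbf p(y))^T$ in the $d$ coordinates of $x$, $(\mathbf p(y)-\mathbf p(x))^T$ in those of $y$, and $0$ elsewhere. $C_d(G)$ is the graph on $[n]$ with edge set $\{f\in\binom{[n]}2:\mathbf r_f\in\operatorname{span}_{\mathbb R}(\mathbf r_e:e\in G)\}$. For $A\subseteq[n]$, let $V_A=\operatorname{span}_{\mathbb R}(\mathbf r_e: e\in\binom A2)$, let $W_A$ be its orthogonal complement in $\mathbb R^{dn}$, and $P_{W_A}$ the orthogonal projection onto $W_A$. Then $C_{d,A}(G)=\{f\in\binom{[n]}2\setminus\binom A2: P_{W_A}\mathbf r_f\in\operatorname{span}_{\mathbb R}(P_{W_A}\mathbf r_e: e\in G)\}$. *)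

From HB Require Import structures.
From mathcomp Require Import all_boot all_order all_algebra.
From mathcomp Require Import reals.
From mathcomp Require Import mpoly.
Set Implicit Arguments. Unset Strict Implicit. Unset Printing Implicit Defensive.
Import Order.TTheory GRing.Theory Num.Theory.
Local Open Scope ring_scope.

Section Rigidity.
Variables (R : realType) (n d : nat).

(* A framework p : [n] -> R^d is the n x d matrix whose row x is p(x).
   Vectors of R^{dn} are the row vectors mxvec M for M : 'M_(n,d), the
   d coordinates of vertex x being row x of M. *)

Definition generic (p : 'M[R]_(n, d)) : Prop :=
  forall q : mpoly (n * d) rat, q != 0 ->
    meval (fun j => mxvec p 0 j) (map_mpoly (ratr : rat -> R) q) != 0.

(* r_{xy}: (p x - p y) in the coordinates of x, (p y - p x) in those of y *)
Definition rmx (p : 'M[R]_(n, d)) (x y : 'I_n) : 'M[R]_(n, d) :=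
  \matrix_(i, k) (((i == x)%:R - (i == y)%:R) * (p x k - p y k)).

Definition rvec (p : 'M[R]_(n, d)) (x y : 'I_n) : 'rV[R]_(n * d) :=
  mxvec (rmx p x y).

Definition spanG (p : 'M[R]_(n, d)) (G : rel 'I_n) : 'M[R]_(n * d) :=
  (\sum_(e : 'I_n * 'I_n | G e.1 e.2) <<rvec p e.1 e.2>>)%MS.

Definition Cd (p : 'M[R]_(n, d)) (G : rel 'I_n) : rel 'I_n :=
  fun x y => (x != y) && (rvec p x y <= spanG p G)%MS.

Definition VA (p : 'M[R]_(n, d)) (A : {set 'I_n}) : 'M[R]_(n * d) :=
  (\sum_(e : 'I_n * 'I_n | (e.1 \in A) && (e.2 \in A) && (e.1 != e.2))
      <<rvec p e.1 e.2>>)%MS.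

(* W_A = orthogonal complement of V_A (row vectors u with u . v = 0 for v in V_A) *)
Definition WA (p : 'M[R]_(n, d)) (A : {set 'I_n}) : 'M[R]_(n * d) :=
  kermx (VA p A)^T.

(* orthogonal projection onto W_A: projection onto W_A along V_A
   (R^{dn} = W_A (+) V_A orthogonally) *)
Definition PWA (p : 'M[R]_(n, d)) (A : {set 'I_n}) (v : 'rV[R]_(n * d))
  : 'rV[R]_(n * d) := v *m proj_mx (WA p A) (VA p A).

Definition spanPG (p : 'M[R]_(n, d)) (A : {set 'I_n}) (G : rel 'I_n)
  : 'M[R]_(n * d) :=
  (\sum_(e : 'I_n * 'I_n | G e.1 e.2) <<PWA p A (rvec p e.1 e.2)>>)%MS.

Definition CdA (p : 'M[R]_(n, d)) (A : {set 'I_n}) (G : rel 'I_n) : rel 'I_n :=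
  fun x y => [&& x != y, ~~ ((x \in A) && (y \in A)) &
                 (PWA p A (rvec p x y) <= spanPG p A G)%MS].

End Rigidity.

(* The clique hypothesis puts V_A inside span(r_e : e in G).  Since P_{W_A}
   projects along V_A, each r_e differs from P_{W_A} r_e by a vector of V_A, so
   span(P_{W_A} r_e : e in G) also lies in span(r_e : e in G); and for f in
   C_{d,A}(G), r_f = P_{W_A} r_f + (r_f - P_{W_A} r_f) lies there as well. *)
From HB Require Import structures.
From mathcomp Require Import all_boot all_order all_algebra.
From mathcomp Require Import reals.
Set Implicit Arguments. Unset Strict Implicit. Unset Printing Implicit Defensive.
Import Order.TTheory GRing.Theory Num.Theory.
Local Open Scope ring_scope.

(* Over a real field, w *m w^T = 0 forces w = 0. *)
Lemma capmx_kermx_tr (F : realFieldType) (m k : nat) (V : 'M[F]_(m, k)) :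
  (kermx V^T :&: V)%MS = 0.
Proof.
apply/eqP/rowV0P => w; rewrite sub_capmx => /andP[/sub_kermxP wV /submxP[a wa]].
have wwT0 : w *m w^T = 0 by rewrite {2}wa trmx_mul mulmxA wV mul0mx.
apply/rowP => j; rewrite [RHS]mxE.
have /eqP := congr1 (fun M : 'M_1 => M 0 0) wwT0; rewrite !mxE.
rewrite psumr_eq0 => [/allP/(_ j)|i _]; last by rewrite mxE -expr2 sqr_ge0.
by rewrite mem_index_enum mxE -expr2 sqrf_eq0 => /(_ isT)/eqP.
Qed.

Lemma row_full_kermx_tr_add (F : realFieldType) (m k : nat) (V : 'M[F]_(m, k)) :
  row_full (kermx V^T + V)%MS.
Proof.
rewrite /row_full mxrank_disjoint_sum ?capmx_kermx_tr // mxrank_ker mxrank_tr.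
by rewrite subnK // rank_leq_col.
Qed.

Lemma orth_proj_compl_sub (F : realFieldType) (k : nat) (V : 'M[F]_k)
    (v : 'rV[F]_k) :
  (v - v *m proj_mx (kermx V^T) V <= V)%MS.
Proof. exact/proj_mx_compl_sub/submx_full/row_full_kermx_tr_add. Qed.

Section Closure.
Variables (R : realType) (n d : nat) (p : 'M[R]_(n, d)).
Variables (G : rel 'I_n) (A : {set 'I_n}).

Lemma PWA_compl_sub (v : 'rV[R]_(n * d)) : (v - PWA p A v <= VA p A)%MS.
Proof. exact: orth_proj_compl_sub. Qed.

Lemma VA_sub_spanG :
  (forall x y, x \in A -> y \in A -> x != y -> Cd p G x y) ->
  (VA p A <= spanG p G)%MS.
Proof.
move=> cliqueA; apply/sumsmx_subP => e /andP[/andP[e1A e2A] e12].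
by rewrite genmxE; case/andP: (cliqueA _ _ e1A e2A e12).
Qed.

Hypothesis VA_spanG : (VA p A <= spanG p G)%MS.

Lemma sub_spanG_PWA (v : 'rV[R]_(n * d)) :
  (v <= spanG p G)%MS = (PWA p A v <= spanG p G)%MS.
Proof.
have compl_sub : (v - PWA p A v <= spanG p G)%MS.
  exact: submx_trans (PWA_compl_sub v) VA_spanG.
apply/idP/idP => [vG | PvG].
- have -> : PWA p A v = v - (v - PWA p A v) by rewrite opprB addrC subrK.
  by rewrite addmx_sub ?eqmx_opp.
- by rewrite -(subrK (PWA p A v) v) addmx_sub.
Qed.

Lemma spanPG_sub_spanG : (spanPG p A G <= spanG p G)%MS.
Proof.
apply/sumsmx_subP => e Ge; rewrite genmxE -sub_spanG_PWA.
by rewrite (sumsmx_sup e) ?genmxE.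
Qed.

End Closure.

Theorem claim2p5 (R : realType) (n d : nat) (p : 'M[R]_(n, d))
  (G : rel 'I_n) (A : {set 'I_n}) :
  (0 < d)%N ->
  generic p ->
  irreflexive G -> symmetric G ->
  (forall x y, x \in A -> y \in A -> x != y -> Cd p G x y) ->
  forall x y, CdA p A G x y -> Cd p G x y.
Proof.
move=> _ _ _ _ cliqueA x y /and3P[xy _ PxyG].
have VA_spanG := VA_sub_spanG cliqueA.
rewrite /Cd xy (sub_spanG_PWA VA_spanG).
exact: submx_trans PxyG (spanPG_sub_spanG VA_spanG).
Qed.
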